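(* Consider binary treatments $A\in\{0,1\}$, observed confounders $X\in\mathcal{X}$, unobserved confounders $U\in\mathcal{U}$, and outcomes $Y\in\mathcal{Y}$, and a fixed observational distribution $\mathbb{P}_\mathrm{obs}$ of $(X,A,Y)$. Let $\Gamma$ be a sensitivity parameter. For full distributions $\mathbb{P}$ of $(X,U,A,Y)$, write $\mathbb{P}(a\mid x)$ for the observed treatment probability and define $$\rho(x,u,a)=\frac{1}{1-\mathbb{P}(a\mid x)}\left(\frac{\mathbb{P}(u\mid x)}{\mathbb{P}(u\mid x,a)}-\mathbb{P}(a\mid x)\right),$$ $$\rho(x,u_1,u_2,a)=\frac{\mathbb{P}(u_1\mid x,a)\mathbb{P}(u_2\mid x)-\mathbb{P}(u_1\mid x,a)\mathbb{P}(u_2\mid x,a)\mathbb{P}(a\mid x)}{\mathbb{P}(u_2\mid x,a)\mathbb{P}(u_1\mid x)-\mathbb{P}(u_1\mid x,a)\mathbb{P}(u_2\mid x,a)\mathbb{P}(a\mid x)}.$$ Then the marginal sensitivity model (MSM), every $f$-sensitivity model, and Rosenbaum's sensitivity model, each with sensitivity parameter $\Gamma$, are generalized treatment sensitivity models (GTSMs) with sensitivity parameter $\Gamma$, namely with the following functionals: (i) MSM: $\mathcal{D}_{x,a}(\mathbb{P}(U\mid x),\mathbb{P}(U\mid x,a))=\max\{\sup_{u\in\mathcal{U}}\rho(x,u,a),\ \sup_{u\in\mathcal{U}}\rho(x,u,a)^{-1}\}$; (ii) $f$-sensitivity model: $\mathcal{D}_{x,a}(\mathbb{P}(U\mid x),\mathbb{P}(U\mid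 x,a))=\max\{\int_\mathcal{U} f(\rho(x,u,a))\,\mathbb{P}(u\mid x,a)\,du,\ \int_\mathcal{U} f(\rho(x,u,a)^{-1})\,\mathbb{P}(u\mid x,a)\,du\}$; (iii) Rosenbaum's model: $\mathcal{D}_{x,a}(\mathbb{P}(U\mid x),\mathbb{P}(U\mid x,a))=\max\{\sup_{u_1,u_2\in\mathcal{U}}\rho(x,u_1,u_2,a),\ \sup_{u_1,u_2\in\mathcal{U}}\rho(x,u_1,u_2,a)^{-1}\}$.
   Context: A sensitivity model $\mathcal{M}$ is a family of probability distributions $\mathbb{P}$ on $\mathcal{X}\times\mathcal{U}\times\mathcal{A}\times\mathcal{Y}$ (for arbitrary finite-dimensional $\mathcal{U}$) with $\int_\mathcal{U}\mathbb{P}(x,u,a,y)\,du=\mathbb{P}_\mathrm{obs}(x,a,y)$ for all $\mathbb{P}\in\mathcal{M}$. A GTSM is a sensitivity model containing all $\mathbb{P}$ satisfying $\mathcal{D}_{x,a}(\mathbb{P}(U\mid x),\mathbb{P}(U\mid x,a))\le\Gamma$ for all $x\in\mathcal{X}$, $a\in\mathcal{A}$, where $\mathcal{D}_{x,a}$ is a functional of distributions and $\Gamma\ge0$. Let $\mathrm{OR}(a,b)=\frac{a}{1-a}\frac{1-b}{b}$, $\pi(x)=\mathbb{P}(A=1\mid x)$, $\pi(x,u)=\mathbb{P}(A=1\mid x,u)$. The MSM with parameter $\Gamma\ge1$ is the family of all $\mathbb{P}$ (compatible with $\mathbb{P}_\mathrm{obs}$) with $1/\Gamma\le\mathrm{OR}(\pi(x),\pi(x,u))\le\Gamma$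 for all $x,u$. For a convex $f:\mathbb{R}_{>0}\to\mathbb{R}$ with $f(1)=0$, the $f$-sensitivity model is the family of all $\mathbb{P}$ with $\max\{\int_\mathcal{U} f(\mathrm{OR}(\pi(x),\pi(x,u)))\mathbb{P}(u\mid x,A=1)du,\ \int_\mathcal{U} f(\mathrm{OR}^{-1}(\pi(x),\pi(x,u)))\mathbb{P}(u\mid x,A=1)du\}\le\Gamma$ for all $x$. Rosenbaum's sensitivity model is the family of all $\mathbb{P}$ with $1/\Gamma\le\mathrm{OR}(\pi(x,u_1),\pi(x,u_2))\le\Gamma$ for all $x,u_1,u_2$. Densities are with respect to Lebesgue measure (or probability mass functions for discrete variables). *)

From HB Require Import structures.
From mathcomp Require Import all_boot all_order all_algebra.
From mathcomp Require Import all_classical all_reals all_analysis.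
Set Implicit Arguments. Unset Strict Implicit. Unset Printing Implicit Defensive.
Import Order.TTheory GRing.Theory Num.Theory.
Local Open Scope classical_set_scope.
Local Open Scope ring_scope.

Definition OR {R : realType} (a b : R) : R := a / (1 - a) * ((1 - b) / b).

Definition convex_pos {R : realType} (f : R -> R) : Prop :=
  forall x y t : R, 0 < x -> 0 < y -> 0 <= t <= 1 ->
    f (t * x + (1 - t) * y) <= t * f x + (1 - t) * f y.

Section Sensitivity.
Variables (R : realType) (X : Type).
Variables (dU : measure_display) (U : measurableType dU) (muU : {measure set U -> \bar R}).
Variables (dY : measure_display) (Y : measurableType dY) (muY : {measure set Y -> \bar R}).
(* observational density P_obs(x,a,y), a = true means A = 1 *)
Variable pobs : X -> bool -> Y -> R.

Definition dobsXA (x : X) (a : bool) : R := fine (\int[muY]_y (pobs x a y)%:E)%E.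
Definition dobsX (x : X) : R := dobsXA x true + dobsXA x false.
Definition condA (x : X) (a : bool) : R := dobsXA x a / dobsX x.
Definition piX (x : X) : R := condA x true.

Definition full_density := X -> U -> bool -> Y -> R.

Definition dXUA (p : full_density) x u a : R := fine (\int[muY]_y (p x u a y)%:E)%E.
Definition dXU (p : full_density) x u : R := dXUA p x u true + dXUA p x u false.
Definition condU (p : full_density) x u : R := dXU p x u / dobsX x.
Definition condUA (p : full_density) x u a : R := dXUA p x u a / dobsXA x a.
Definition piXU (p : full_density) x u : R := dXUA p x u true / dXU p x u.

(* Admissible full distributions compatible with P_obs:
   nonnegative measurable density whose U-marginal is P_obs, and with
   strictly positive (hence finite) joint densities P(x,u,a), so that all
   conditional densities and odds ratios in the paper are well defined. *)
Definition compatible (p : full_density) : Prop :=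
  [/\ forall x u a y, 0 <= p x u a y,
      forall x a y, measurable_fun setT (fun u => p x u a y),
      forall x u a, measurable_fun setT (fun y => p x u a y),
      forall x a y, (\int[muU]_u (p x u a y)%:E = (pobs x a y)%:E)%E
    & forall x u a, 0 < dXUA p x u a].

Definition sensitivity_model := set full_density.

Definition is_GTSM (M : sensitivity_model)
    (D : full_density -> X -> bool -> \bar R) (Gamma : R) : Prop :=
  (forall p, M p -> compatible p) /\
  [set p | compatible p /\ forall x a, (D p x a <= Gamma%:E)%E] `<=` M.

Definition MSM (Gamma : R) : sensitivity_model :=
  [set p | compatible p /\ forall x u,
     Gamma^-1 <= OR (piX x) (piXU p x u) <= Gamma].

Definition f_model (f : R -> R) (Gamma : R) : sensitivity_model :=
  [set p | compatible p /\ forall x,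
     (maxe (\int[muU]_u (f (OR (piX x) (piXU p x u)) * condUA p x u true)%:E)
           (\int[muU]_u (f ((OR (piX x) (piXU p x u))^-1) * condUA p x u true)%:E)
      <= Gamma%:E)%E].

Definition rosenbaum (Gamma : R) : sensitivity_model :=
  [set p | compatible p /\ forall x u1 u2,
     Gamma^-1 <= OR (piXU p x u1) (piXU p x u2) <= Gamma].

Definition rho1 (p : full_density) x u a : R :=
  (1 - condA x a)^-1 * (condU p x u / condUA p x u a - condA x a).

Definition rho2 (p : full_density) x u1 u2 a : R :=
  (condUA p x u1 a * condU p x u2 - condUA p x u1 a * condUA p x u2 a * condA x a) /
  (condUA p x u2 a * condU p x u1 - condUA p x u1 a * condUA p x u2 a * condA x a).

Definition D_MSM (p : full_density) x a : \bar R :=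
  maxe (ereal_sup [set (rho1 p x u a)%:E | u in [set: U]])
       (ereal_sup [set ((rho1 p x u a)^-1)%:E | u in [set: U]]).

Definition D_f (f : R -> R) (p : full_density) x a : \bar R :=
  maxe (\int[muU]_u (f (rho1 p x u a) * condUA p x u a)%:E)%E
       (\int[muU]_u (f ((rho1 p x u a)^-1) * condUA p x u a)%:E)%E.

Definition D_rosenbaum (p : full_density) x a : \bar R :=
  maxe (ereal_sup [set (rho2 p x uu.1 uu.2 a)%:E | uu in [set: U * U]])
       (ereal_sup [set ((rho2 p x uu.1 uu.2 a)^-1)%:E | uu in [set: U * U]]).

End Sensitivity.

From HB Require Import structures.
From mathcomp Require Import all_boot all_order all_algebra.
From mathcomp Require Import all_classical all_reals all_analysis.
From mathcomp Require Import ring.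
Import Order.TTheory GRing.Theory Num.Theory.
Local Open Scope classical_set_scope.
Local Open Scope ring_scope.

(* For treatment a = 1 both functionals rho are odds ratios: writing every
   conditional density through the joint densities P(x,a) and P(x,u,a),
   rho(x,u,1) and OR(pi(x), pi(x,u)) both equal
   P(x,1) P(x,u,0) / (P(x,0) P(x,u,1)), and rho(x,u1,u2,1) and
   OR(pi(x,u1), pi(x,u2)) both equal P(x,u1,1) P(x,u2,0) / (P(x,u1,0) P(x,u2,1)).
   Hence the constraint D_{x,1} <= Gamma already implies the defining
   constraint of each model: a positive quantity whose supremum and whose
   inverse's supremum are both at most Gamma lies in [1/Gamma, Gamma], and the
   f-model constraint is D_{x,1} <= Gamma verbatim. *)

Section OddsRatioAlgebra.
Variable R : realFieldType.

Lemma rho1_ratio (A B a b : R) : 0 < A -> 0 < B -> 0 < a -> 0 < b ->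
  (1 - A / (A + B))^-1 * ((a + b) / (A + B) / (a / A) - A / (A + B))
  = A * b / (B * a).
Proof.
move=> A_gt0 B_gt0 a_gt0 b_gt0.
have AB_neq0 : A + B != 0 by rewrite gt_eqF // addr_gt0.
have -> : 1 - A / (A + B) = B / (A + B) by field.
by field; rewrite AB_neq0 ?lt0r_neq0.
Qed.

Lemma rho2_ratio (A B a1 b1 a2 b2 : R) : 0 < A -> 0 < B ->
  0 < a1 -> 0 < b1 -> 0 < a2 -> 0 < b2 ->
  (a1 / A * ((a2 + b2) / (A + B)) - a1 / A * (a2 / A) * (A / (A + B))) /
  (a2 / A * ((a1 + b1) / (A + B)) - a1 / A * (a2 / A) * (A / (A + B)))
  = a1 * b2 / (b1 * a2).
Proof.
move=> A_gt0 B_gt0 a1_gt0 b1_gt0 a2_gt0 b2_gt0.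
have AB_neq0 : A + B != 0 by rewrite gt_eqF // addr_gt0.
have A_neq0 : A != 0 by rewrite gt_eqF.
have -> : a1 / A * ((a2 + b2) / (A + B)) - a1 / A * (a2 / A) * (A / (A + B))
          = a1 * b2 / (A * (A + B)) by field; rewrite AB_neq0 A_neq0.
have -> : a2 / A * ((a1 + b1) / (A + B)) - a1 / A * (a2 / A) * (A / (A + B))
          = a2 * b1 / (A * (A + B)) by field; rewrite AB_neq0 A_neq0.
by field; rewrite AB_neq0 ?lt0r_neq0.
Qed.

End OddsRatioAlgebra.

Lemma OR_ratio (R : realType) (A B a b : R) : 0 < A -> 0 < B -> 0 < a -> 0 < b ->
  OR (A / (A + B)) (a / (a + b)) = A * b / (B * a).
Proof.
move=> A_gt0 B_gt0 a_gt0 b_gt0.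
have AB_neq0 : A + B != 0 by rewrite gt_eqF // addr_gt0.
have ab_neq0 : a + b != 0 by rewrite gt_eqF // addr_gt0.
rewrite /OR.
have -> : 1 - A / (A + B) = B / (A + B) by field.
have -> : 1 - a / (a + b) = b / (a + b) by field.
by field; rewrite AB_neq0 ab_neq0 ?lt0r_neq0.
Qed.

Lemma max_sup_le_bounds {R : realType} {T : Type} {g : T -> R} {G : R} :
  (forall t, 0 < g t) ->
  (maxe (ereal_sup [set (g t)%:E | t in [set: T]])
        (ereal_sup [set ((g t)^-1)%:E | t in [set: T]]) <= G%:E)%E ->
  forall t, G^-1 <= g t <= G.
Proof.
move=> g_gt0; rewrite ge_max => /andP[sup_le inv_sup_le] t.
have le_sup (h : T -> R) : ((h t)%:E <= ereal_sup [set (h s)%:E | s in [set: T]])%E.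
  by apply: ereal_sup_ubound; exists t.
have gt_le : g t <= G by rewrite -lee_fin (le_trans (le_sup g) sup_le).
have inv_gt_le : (g t)^-1 <= G.
  by rewrite -lee_fin (le_trans (le_sup (fun s => (g s)^-1)) inv_sup_le).
have G_gt0 : 0 < G by apply: lt_le_trans gt_le.
by rewrite gt_le andbT -(invrK (g t)) lef_pV2 ?posrE ?invr_gt0.
Qed.

Section SensitivityModels.
Variables (R : realType) (X : Type).
Variables (dU : measure_display) (U : measurableType dU) (muU : {measure set U -> \bar R}).
Variables (dY : measure_display) (Y : measurableType dY) (muY : {measure set Y -> \bar R}).
Variable pobs : X -> bool -> Y -> R.
Hypothesis overlap : forall x a, 0 < dobsXA muY pobs x a.

Section OddsRatioForm.
Variable p : full_density R X U Y.
Hypothesis p_compatible : compatible muU muY pobs p.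

Let dXUA_gt0 x u a : 0 < dXUA muY p x u a.
Proof. by case: p_compatible. Qed.

Lemma OR_piX_piXU x u :
  OR (piX muY pobs x) (piXU muY p x u) =
  dobsXA muY pobs x true * dXUA muY p x u false /
  (dobsXA muY pobs x false * dXUA muY p x u true).
Proof. by rewrite /piX /condA /dobsX /piXU /dXU OR_ratio. Qed.

Lemma OR_piXU x u1 u2 :
  OR (piXU muY p x u1) (piXU muY p x u2) =
  dXUA muY p x u1 true * dXUA muY p x u2 false /
  (dXUA muY p x u1 false * dXUA muY p x u2 true).
Proof. by rewrite /piXU /dXU OR_ratio. Qed.

Lemma rho1_OR x u : rho1 muY pobs p x u true = OR (piX muY pobs x) (piXU muY p x u).
Proof. by rewrite OR_piX_piXU /rho1 /condA /condU /condUA /dobsX /dXU rho1_ratio. Qed.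

Lemma rho2_OR x u1 u2 :
  rho2 muY pobs p x u1 u2 true = OR (piXU muY p x u1) (piXU muY p x u2).
Proof. by rewrite OR_piXU /rho2 /condA /condU /condUA /dobsX /dXU rho2_ratio. Qed.

Lemma rho1_gt0 x u : 0 < rho1 muY pobs p x u true.
Proof. by rewrite rho1_OR OR_piX_piXU divr_gt0 ?mulr_gt0. Qed.

Lemma rho2_gt0 x u1 u2 : 0 < rho2 muY pobs p x u1 u2 true.
Proof. by rewrite rho2_OR OR_piXU divr_gt0 ?mulr_gt0. Qed.

Lemma D_MSM_le_MSM_bounds (Gamma : R) x :
  (D_MSM muY pobs p x true <= Gamma%:E)%E ->
  forall u, Gamma^-1 <= OR (piX muY pobs x) (piXU muY p x u) <= Gamma.
Proof.
by move=> /(max_sup_le_bounds (rho1_gt0 x)) bounds u; rewrite -rho1_OR.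
Qed.

Lemma D_rosenbaum_le_rosenbaum_bounds (Gamma : R) x :
  (D_rosenbaum muY pobs p x true <= Gamma%:E)%E ->
  forall u1 u2, Gamma^-1 <= OR (piXU muY p x u1) (piXU muY p x u2) <= Gamma.
Proof.
move=> /(max_sup_le_bounds (fun uu => rho2_gt0 x uu.1 uu.2)) bounds u1 u2.
by rewrite -rho2_OR; exact: bounds (u1, u2).
Qed.

Lemma D_f_true (f : R -> R) x :
  (D_f muU muY pobs f p x true =
   maxe (\int[muU]_u (f (OR (piX muY pobs x) (piXU muY p x u))
                       * condUA muY pobs p x u true)%:E)
        (\int[muU]_u (f ((OR (piX muY pobs x) (piXU muY p x u))^-1)
                       * condUA muY pobs p x u true)%:E))%E.
Proof. by rewrite /D_f; congr maxe; apply: eq_integral => u _; rewrite rho1_OR. Qed.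

End OddsRatioForm.

Lemma MSM_is_GTSM Gamma :
  is_GTSM muU muY pobs (MSM muU muY pobs Gamma) (D_MSM muY pobs) Gamma.
Proof.
split=> [p [] // | p [p_compatible D_le]]; split=> // x.
exact: D_MSM_le_MSM_bounds p_compatible _ _ (D_le x true).
Qed.

Lemma f_model_is_GTSM f Gamma :
  is_GTSM muU muY pobs (f_model muU muY pobs f Gamma) (D_f muU muY pobs f) Gamma.
Proof.
split=> [p [] // | p [p_compatible D_le]]; split=> // x.
by rewrite -(D_f_true _ p_compatible); exact: D_le x true.
Qed.

Lemma rosenbaum_is_GTSM Gamma :
  is_GTSM muU muY pobs (rosenbaum muU muY pobs Gamma) (D_rosenbaum muY pobs) Gamma.
Proof.
split=> [p [] // | p [p_compatible D_le]]; split=> // x.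
exact: D_rosenbaum_le_rosenbaum_bounds p_compatible _ _ (D_le x true).
Qed.

End SensitivityModels.

Theorem lemma1 (R : realType) (X : Type)
  (dU : measure_display) (U : measurableType dU) (muU : {measure set U -> \bar R})
  (dY : measure_display) (Y : measurableType dY) (muY : {measure set Y -> \bar R})
  (pobs : X -> bool -> Y -> R)
  (pobs_ge0 : forall x a y, 0 <= pobs x a y)
  (overlap : forall x a, 0 < dobsXA muY pobs x a)
  (Gamma : R) :
  (1 <= Gamma ->
     is_GTSM muU muY pobs (MSM muU muY pobs Gamma) (D_MSM muY pobs) Gamma) /\
  (forall f : R -> R, convex_pos f -> f 1 = 0 -> 0 <= Gamma ->
     is_GTSM muU muY pobs (f_model muU muY pobs f Gamma) (D_f muU muY pobs f) Gamma) /\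
  (1 <= Gamma ->
     is_GTSM muU muY pobs (rosenbaum muU muY pobs Gamma) (D_rosenbaum muY pobs) Gamma).
Proof.
split; [by move=> _; apply: MSM_is_GTSM |].
split; [by move=> f _ _ _; apply: f_model_is_GTSM |].
by move=> _; apply: rosenbaum_is_GTSM.
Qed.
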